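(* Suppose that $k<n$ are positive reals and $t\le a$ are positive integers such that $a,t=\alpha_0(n)+O(1)$ and $2\le n/k=t-\Theta(1)$. Then, with $\rho=n/k$, \[ \hat L_0(n,k,t)=\Big(a-\rho-1-\frac{2}{\log2}\Big)(\log n-\log\log n)+\log\mu_a(n)+O(1). \]
   Context: $\alpha_0(n)=2\log_2 n-2\log_2\log_2 n+2\log_2(e/2)+1$, $\mu_a(n)=\binom na2^{-\binom a2}$, $d_i=2^{\binom i2}i!$. For positive integer $t$ and reals $\rho\in(1,t)$, $k>0$: $\tilde L_0(\rho,k,t)=\sup\{\rho\log(\rho k)-\log k-\rho+1-\sum_{i=1}^tp_i\log(p_id_i)\}$, the supremum over $(p_i)_{i=1}^t\in[0,1]^t$ with $\sum_ip_i=1$, $\sum_iip_i=\rho$ (with $0\log0=0$); and $\hat L_0(n,k,t)=\tilde L_0(n/k,k,t)$. Logarithms are natural; asymptotics are as $n\to\infty$ with the implicit constants in the hypotheses fixed. *)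

From HB Require Import structures.
From mathcomp Require Import all_boot all_order all_algebra.
From mathcomp Require Import all_classical all_reals all_analysis.
Set Implicit Arguments. Unset Strict Implicit. Unset Printing Implicit Defensive.
Import Order.TTheory GRing.Theory Num.Theory.
Local Open Scope ring_scope.
Local Open Scope classical_set_scope.

Section Defs.
Variable R : realType.

Definition log2 (x : R) : R := ln x / ln 2.

Definition alpha0 (n : R) : R :=
  2 * log2 n - 2 * log2 (log2 n) + 2 * log2 (expR 1 / 2) + 1.

Definition binomR (n : R) (a : nat) : R :=
  (\prod_(0 <= i < a) (n - i%:R)) / (a`!)%:R.

Definition mu (a : nat) (n : R) : R := binomR n a / (2 ^+ 'C(a, 2)).

Definition dcoef (i : nat) : R := (2 ^ 'C(i, 2) * i`!)%:R.

Definition plogpd (p : R) (i : nat) : R :=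
  if p == 0 then 0 else p * ln (p * dcoef i).

Definition Lobj (rho k : R) (t : nat) (p : nat -> R) : R :=
  rho * ln (rho * k) - ln k - rho + 1 - \sum_(1 <= i < t.+1) plogpd (p i) i.

Definition feasible (rho : R) (t : nat) (p : nat -> R) : Prop :=
  (forall i, (1 <= i <= t)%N -> 0 <= p i <= 1) /\
  \sum_(1 <= i < t.+1) p i = 1 /\
  \sum_(1 <= i < t.+1) i%:R * p i = rho.

Definition Ltilde0 (rho k : R) (t : nat) : R :=
  sup [set v | exists p : nat -> R, feasible rho t p /\ v = Lobj rho k t p].

Definition Lhat0 (n k : R) (t : nat) : R := Ltilde0 (n / k) k t.

End Defs.

(* Write rho = n / k, m = floor rho and q_m = d_(m+1) / d_m = 2^m (m+1).
   The two-point distribution on {m, m+1} with mean rho shows that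
   Ltilde0 >= Lbase - ln d_m - (rho - m) ln q_m, where Lbase is the part of
   the objective not depending on p.  Conversely Gibbs' inequality with the
   tilt ln q_m bounds every feasible value by Lbase + ln Z, and the tilted
   weights are maximal at m and m+1 and decay at least like 2^-j away from
   them, so Z is at most 4 times the weight at m: Ltilde0 is determined up
   to ln 4.
   For the expansion, m = rho + O(1) = alpha_0(n) + O(1) gives
   ln q_m = m ln 2 + ln (m+1) = 2 ln n - ln ln n + O(1); moreover
   ln d_a = ln d_m + (a - m) ln q_m + O((a - m)^2) and the falling factorial
   in mu_a(n) has logarithm a ln n - O(a^2 / n).  All corrections are O(1)
   because a - rho = O(1). *)

From mathcomp Require Import all_boot all_order all_algebra.
From mathcomp Require Import all_classical all_reals all_analysis.
From mathcomp Require Import ring lra.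
Set Implicit Arguments. Unset Strict Implicit. Unset Printing Implicit Defensive.
Import Order.TTheory GRing.Theory Num.Theory.
Local Open Scope ring_scope.

Section RealEstimates.
Variable R : realType.
Implicit Types x y : R.

Lemma ln_le_subr1 x : 0 < x -> ln x <= x - 1.
Proof. by move=> x0; have := @le_ln1Dx R (x - 1); rewrite addrCA subrr addr0; apply; lra. Qed.

Lemma ln_sub_le x y : 0 < x -> 0 < y -> ln x - ln y <= x / y - 1.
Proof. by move=> x0 y0; rewrite -ln_div ?posrE //; apply: ln_le_subr1; rewrite divr_gt0. Qed.

Lemma ln2_gt0 : 0 < ln (2 : R).
Proof. by apply: ln_gt0; lra. Qed.

Lemma ln2_le1 : ln (2 : R) <= 1.
Proof. by have := @ln_le_subr1 2 ltac:(lra); lra. Qed.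

Lemma ln4_le3 : ln (4 : R) <= 3.
Proof. by have := @ln_le_subr1 4 ltac:(lra); lra. Qed.

Lemma ln_le_half x : 0 < x -> ln x <= x / 2.
Proof.
move=> x0; have e2 : 2 <= expR (1 : R) by have := @expR_ge1Dx R 1; lra.
have := ln_le_subr1 (divr_gt0 x0 (expR_gt0 1)).
rewrite ln_div ?posrE ?expR_gt0 // expRK.
have : x / expR 1 <= x / 2 by rewrite ler_pM2l // lef_pV2 ?posrE ?expR_gt0.
lra.
Qed.

Lemma expR_ge_cube x : 0 <= x -> x ^+ 3 / 6 <= expR x.
Proof.
by move=> x0; have := expR_ge1Dxn 2 x0; have -> : 3`!%:R = 6 :> R by []; lra.
Qed.

Lemma ln_prod (I : eqType) (r : seq I) (f : I -> R) :
  (forall i, i \in r -> 0 < f i) -> ln (\prod_(i <- r) f i) = \sum_(i <- r) ln (f i).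
Proof.
elim: r => [|j r IH] f0; first by rewrite !big_nil ln1.
have fr i : i \in r -> 0 < f i by move=> ir; apply: f0; rewrite inE ir orbT.
rewrite !big_cons lnM ?posrE ?f0 ?mem_head ?IH //.
by rewrite big_seq prodr_gt0 // => i /fr.
Qed.

Lemma ln_falling_bounds x a : a%:R < x ->
  0 <= a%:R * ln x - ln (\prod_(0 <= i < a) (x - i%:R)) <= a%:R ^+ 2 / (x - a%:R).
Proof.
move=> ax; have xa0 : 0 < x - a%:R by lra.
have x0 : 0 < x by have := ler0n R a; lra.
have xi i : (0 <= i < a)%N -> x - a%:R <= x - i%:R.
  move=> /andP[_ ia]; have : i%:R <= a%:R :> R by rewrite ler_nat ltnW.
  lra.
rewrite ln_prod => [|i]; last by rewrite mem_index_iota => /xi; lra.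
have -> : a%:R * ln x = \sum_(0 <= i < a) ln x by rewrite sumr_const_nat subn0 mulr_natl.
rewrite -sumrB; apply/andP; split.
  rewrite big_nat; apply: sumr_ge0 => i /xi hi.
  by rewrite subr_ge0 ler_ln ?posrE; have := ler0n R i; lra.
have -> : a%:R ^+ 2 / (x - a%:R) = \sum_(0 <= i < a) (a%:R / (x - a%:R)).
  by rewrite sumr_const_nat subn0 -[(_ / _) *+ a]mulr_natl expr2 mulrA.
apply: ler_sum_nat => i hi; have xi0 : 0 < x - i%:R by have := xi i hi; lra.
apply: le_trans (ln_sub_le x0 xi0) _.
have -> : x / (x - i%:R) - 1 = i%:R / (x - i%:R) by field; rewrite lt0r_neq0.
apply: ler_pM => //; first by rewrite invr_ge0 ltW.
  by case/andP: hi => _ ia; rewrite ler_nat ltnW.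
by rewrite lef_pV2 ?posrE ?xi.
Qed.

End RealEstimates.

Section Dcoef.
Variable R : realType.

Definition dratio (i : nat) : R := (2 ^ i * i.+1)%:R.

Lemma dcoef_gt0 i : 0 < dcoef R i.
Proof. by rewrite ltr0n muln_gt0 expn_gt0 fact_gt0. Qed.

Lemma dratio_gt0 i : 0 < dratio i.
Proof. by rewrite ltr0n muln_gt0 expn_gt0. Qed.

Lemma dcoefS i : dcoef R i.+1 = dcoef R i * dratio i.
Proof.
rewrite /dcoef /dratio -natrM binS bin1 expnD factS; congr _%:R.
by rewrite [RHS]mulnACA [(i`! * _)%N]mulnC.
Qed.

Lemma ln_dcoefS i : ln (dcoef R i.+1) = ln (dcoef R i) + ln (dratio i).
Proof. by rewrite dcoefS lnM // posrE ?dcoef_gt0 ?dratio_gt0. Qed.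

Lemma ln_dratio i : ln (dratio i) = i%:R * ln 2 + ln i.+1%:R.
Proof.
by rewrite /dratio natrM natrX lnM ?posrE ?exprn_gt0 // lnXn // mulr_natl.
Qed.

Lemma dratio_double i j : (i < j)%N -> 2 * dratio i <= dratio j.
Proof.
move=> ij; rewrite /dratio -natrM ler_nat mulnA -expnS.
by apply: leq_mul; [exact: leq_pexp2l | exact: ltnW].
Qed.

Lemma ln_dcoef_sub i j : (i <= j)%N ->
  ln (dcoef R j) - ln (dcoef R i) = \sum_(i <= l < j) ln (dratio l).
Proof.
elim: j => [|j IH]; first by rewrite leqn0 => /eqP ->; rewrite big_geq // subrr.
rewrite leq_eqVlt => /predU1P[<-|]; first by rewrite big_geq // subrr.
by rewrite ltnS => ij; rewrite big_nat_recr //= -IH // ln_dcoefS; lra.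
Qed.

Lemma ln_dratio_sub_bounds m l : (m <= l)%N ->
  0 <= ln (dratio l) - ln (dratio m) <= (l%:R - m%:R) + (l.+1%:R / m.+1%:R - 1).
Proof.
move=> ml; rewrite !ln_dratio.
have lm : 0 <= l%:R - m%:R :> R by rewrite subr_ge0 ler_nat.
have := ln_sub_le (ltr0Sn R l) (ltr0Sn R m).
have : ln m.+1%:R <= ln l.+1%:R :> R by rewrite ler_ln ?posrE ?ltr0Sn // ler_nat.
have : (l%:R - m%:R) * ln 2 <= l%:R - m%:R :> R by rewrite ler_piMr ?ln2_le1.
have := mulr_ge0 lm (ltW (@ln2_gt0 R)).
set r := _ / _; rewrite mulrBl; lra.
Qed.

Lemma mu_dcoef (n : R) a :
  mu a n = (\prod_(0 <= i < a) (n - i%:R)) / dcoef R a.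
Proof. by rewrite /mu /binomR /dcoef natrM natrX [_ * _`!%:R]mulrC invfM mulrA. Qed.

Lemma ln_mu (n : R) a : a%:R < n ->
  ln (mu a n) = ln (\prod_(0 <= i < a) (n - i%:R)) - ln (dcoef R a).
Proof.
move=> an; rewrite mu_dcoef ln_div ?posrE ?dcoef_gt0 // big_nat prodr_gt0 // => i /andP[_ ia].
have : i%:R < a%:R :> R by rewrite ltr_nat.
lra.
Qed.

End Dcoef.

Section GeometricSums.
Variable R : realType.
Implicit Types f : nat -> R.

Lemma sum_halving_le f m n :
  (forall i, (m <= i)%N -> 0 <= f i) ->
  (forall i, (m <= i)%N -> 2 * f i.+1 <= f i) ->
  \sum_(m <= i < n) f i <= 2 * f m.
Proof.
move=> f_ge0 f_half.
suff inv : (m <= n)%N -> \sum_(m <= i < n) f i + 2 * f n <= 2 * f m.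
  have [mn|nm] := leqP m n; last by rewrite big_geq ?(ltnW nm) //; have := f_ge0 m (leqnn m); lra.
  by have := inv mn; have := f_ge0 n mn; lra.
elim: n => [|n IH]; first by rewrite leqn0 => /eqP ->; rewrite big_geq //; lra.
rewrite leq_eqVlt => /predU1P[<-|]; first by rewrite big_geq //; lra.
rewrite ltnS => mn; rewrite big_nat_recr //=.
by have := IH mn; have := f_half n mn; lra.
Qed.

Lemma sum_doubling_le f l m :
  (forall i, (i <= m)%N -> 0 <= f i) ->
  (forall i, (i < m)%N -> 2 * f i <= f i.+1) ->
  \sum_(l <= i < m.+1) f i <= 2 * f m.
Proof.
move=> f_ge0 f_double.
have [lm|ml] := leqP l m; last by rewrite big_geq //; have := f_ge0 m (leqnn m); lra.
suff inv : \sum_(l <= i < m.+1) f i + f l <= 2 * f m by have := f_ge0 l lm; lra.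
elim: m lm f_ge0 f_double => [|m IH] lm f_ge0 f_double.
  by move: lm; rewrite leqn0 => /eqP ->; rewrite big_nat1; lra.
move: lm; rewrite leq_eqVlt => /predU1P[->|]; first by rewrite big_nat1; lra.
rewrite ltnS => lm; rewrite big_nat_recr //=; last exact: leqW.
have := IH lm (fun i im => f_ge0 i (leqW im)) (fun i im => f_double i (ltnW im)).
by have := f_double m (ltnSn m); lra.
Qed.

End GeometricSums.

Section Gibbs.
Variable R : realType.

(* ln y <= y - 1 at y = e^c / (Z p) *)
Lemma entropy_young (p c Z : R) : 0 <= p -> 0 < Z ->
  p * c - p * ln p <= expR c / Z - p + p * ln Z.
Proof.
move=> p0 Z0; have ecZ : 0 < expR c / Z by rewrite divr_gt0 ?expR_gt0.
have [->|pn0] := eqVneq p 0; first by lra.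
have pp : 0 < p by rewrite lt_def pn0 p0.
have := ln_sub_le ecZ pp; rewrite ln_div ?posrE ?expR_gt0 // expRK => h.
have e : p * (expR c / Z / p - 1) = expR c / Z - p by field; rewrite lt0r_neq0.
by have := ler_wpM2l p0 h; rewrite e; lra.
Qed.

Lemma gibbs_le (p c : nat -> R) m n :
  (forall i, (m <= i < n)%N -> 0 <= p i) -> \sum_(m <= i < n) p i = 1 ->
  \sum_(m <= i < n) (p i * c i - p i * ln (p i)) <= ln (\sum_(m <= i < n) expR (c i)).
Proof.
move=> p_ge0 p_sum1; set Z := \sum_(m <= i < n) expR (c i).
have mn : (m < n)%N by rewrite ltnNge; apply/negP => nm; move: p_sum1; rewrite big_geq //; lra.
have Z0 : 0 < Z.
  rewrite /Z big_ltn //; apply: ltr_pwDl; first exact: expR_gt0.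
  by apply: sumr_ge0 => i _; exact: ltW (expR_gt0 _).
apply: le_trans (ler_sum_nat (fun i hi => entropy_young (c i) (p_ge0 i hi) Z0)) _.
rewrite !big_split /= -mulr_suml sumrN -mulr_suml p_sum1 -/Z.
by rewrite divff ?lt0r_neq0 // mul1r subrr add0r.
Qed.

End Gibbs.

Section Objective.
Variable R : realType.

Definition Lbase (rho k : R) : R := rho * ln (rho * k) - ln k - rho + 1.

Lemma Lbase_div (n k : R) : 0 < n -> 0 < k ->
  Lbase (n / k) k = (n / k - 1) * ln n + ln (n / k) - n / k + 1.
Proof. by move=> n0 k0; rewrite /Lbase divfK ?lt0r_neq0 // ln_div ?posrE //; ring. Qed.

Lemma plogpdE (p : R) i : 0 <= p -> plogpd p i = p * ln p + p * ln (dcoef R i).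
Proof.
move=> p0; rewrite /plogpd; have [->|pn0] := eqVneq p 0; first by rewrite !mul0r addr0.
by rewrite lnM ?posrE ?dcoef_gt0 ?lt_def ?pn0 // mulrDr.
Qed.

Lemma plogpd_le (p : R) i : 0 <= p <= 1 -> plogpd p i <= p * ln (dcoef R i).
Proof.
move=> /andP[p0 p1]; rewrite plogpdE // gerDr.
by apply: mulr_ge0_le0 => //; exact: ln_le0.
Qed.

Lemma Lobj_le_partition (rho k lam : R) t p : feasible rho t p ->
  Lobj rho k t p <=
  Lbase rho k + ln (\sum_(1 <= i < t.+1) expR (lam * (i%:R - rho) - ln (dcoef R i))).
Proof.
move=> [p01 [p_sum1 p_mean]].
have p0 i : (1 <= i < t.+1)%N -> 0 <= p i by rewrite ltnS => /p01 /andP[].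
have := gibbs_le (fun i => lam * (i%:R - rho) - ln (dcoef R i)) p0 p_sum1.
suff -> : \sum_(1 <= i < t.+1) (p i * (lam * (i%:R - rho) - ln (dcoef R i)) - p i * ln (p i))
          = - \sum_(1 <= i < t.+1) plogpd (p i) i by rewrite /Lobj /Lbase; lra.
transitivity (\sum_(1 <= i < t.+1) (lam * (i%:R * p i) - lam * rho * p i - plogpd (p i) i)).
  by apply: eq_big_nat => i hi; rewrite plogpdE ?p0 //; ring.
by rewrite !sumrB -!mulr_sumr p_mean p_sum1; ring.
Qed.

Lemma Ltilde0_sandwich (rho k B : R) t p :
  feasible rho t p -> (forall q, feasible rho t q -> Lobj rho k t q <= B) ->
  Lobj rho k t p <= Ltilde0 rho k t <= B.
Proof.
move=> fp ub; set S := [set v | exists q, feasible rho t q /\ v = Lobj rho k t q]%classic.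
have S0 : (S !=set0)%classic by exists (Lobj rho k t p), p.
have ubS : ubound S B by move=> _ [q [fq ->]]; exact: ub.
apply/andP; split; last exact: ge_sup.
by apply: sup_upper_bound; [split=> //; exists B | exists p].
Qed.

End Objective.

Section TwoPointSums.
Variable R : realType.

Definition two_point (m : nat) (th : R) (i : nat) : R :=
  (1 - th) * (i == m)%:R + th * (i == m.+1)%:R.

Lemma sum_nat_indicator (F : nat -> R) a b j : (a <= j < b)%N ->
  \sum_(a <= i < b) F i * (i == j)%:R = F j.
Proof.
move=> hj; rewrite (eq_bigr (fun i => if i == j then F i else 0)); last first.
  by move=> i _; case: eqP; rewrite ?mulr1 ?mulr0.
by rewrite -big_mkcond big_nat1_eq hj.
Qed.

Lemma sum_two_point (F : nat -> R) m th a b :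
  (a <= m)%N -> (m.+1 < b)%N ->
  \sum_(a <= i < b) F i * two_point m th i = (1 - th) * F m + th * F m.+1.
Proof.
move=> am mb; rewrite /two_point.
under eq_bigr do rewrite mulrDr mulrCA [F _ * (th * _)]mulrCA.
rewrite big_split -!mulr_sumr /= !sum_nat_indicator //.
  by rewrite (leq_trans am) ?leqnSn.
by rewrite am (ltn_trans (ltnSn m)).
Qed.

End TwoPointSums.

Section TwoPoint.
Variables (R : realType) (rho k : R) (t : nat).
Hypotheses (rho_ge1 : 1 <= rho) (rho_lt_t : rho < t%:R).

Let m := Num.truncn rho.
Let th := rho - m%:R.
Let lam := ln (dratio R m).
Let w i := expR (lam * (i%:R - rho) - ln (dcoef R i)).

Let m_le_rho : m%:R <= rho < m%:R + 1.
Proof. by rewrite natr1 truncn_itv //; have := rho_ge1; lra. Qed.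

Let m_gt0 : (0 < m)%N.
Proof. by rewrite truncn_gt0. Qed.

Let m_lt_t : (m < t)%N.
Proof. by rewrite -(ltr_nat R); have := m_le_rho; have := rho_lt_t; lra. Qed.

Let two_point_feasible : feasible rho t (two_point m th).
Proof.
have hth : 0 <= th < 1 by rewrite /th; have := m_le_rho; lra.
split; [|split].
- move=> i _; rewrite /two_point.
  by case: eqP => _; case: eqP => _; rewrite ?mulr1 ?mulr0; lra.
- under eq_bigr do rewrite -[two_point _ _ _]mul1r.
  by rewrite sum_two_point //; ring.
- by rewrite sum_two_point // -natr1 /th; ring.
Qed.

Let Lobj_two_point :
  Lbase rho k - ln (dcoef R m) - th * lam <= Lobj rho k t (two_point m th).
Proof.
have [p01 _] := two_point_feasible.
have : \sum_(1 <= i < t.+1) plogpd (two_point m th i) i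
         <= \sum_(1 <= i < t.+1) ln (dcoef R i) * two_point m th i.
  by apply: ler_sum_nat => i /andP[i1 it]; rewrite mulrC plogpd_le // p01 // i1 -ltnS.
by rewrite sum_two_point // ln_dcoefS /Lobj /Lbase /lam; lra.
Qed.

Let wS i : w i.+1 = w i * (dratio R m / dratio R i).
Proof.
rewrite /w ln_dcoefS.
have -> : lam * (i.+1%:R - rho) - (ln (dcoef R i) + ln (dratio R i))
        = (lam * (i%:R - rho) - ln (dcoef R i)) + (lam - ln (dratio R i)).
  by rewrite -natr1; ring.
by rewrite expRD expRD expRN /lam !lnK ?posrE ?dratio_gt0.
Qed.

Let partition_le : \sum_(1 <= i < t.+1) w i <= 4 * w m.
Proof.
have w_ge0 i : 0 <= w i by exact: ltW (expR_gt0 _).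
have wm : w m.+1 = w m by rewrite wS divff ?mulr1 // lt0r_neq0 ?dratio_gt0.
rewrite (@big_cat_nat _ _ _ m.+1) //=; last by rewrite ltnS ltnW.
have lo : \sum_(1 <= i < m.+1) w i <= 2 * w m.
  apply: sum_doubling_le => // i im; rewrite wS [2 * _]mulrC.
  apply: ler_wpM2l => //; rewrite ler_pdivlMr ?dratio_gt0 //.
  exact: dratio_double.
have hi : \sum_(m.+1 <= i < t.+1) w i <= 2 * w m.+1.
  apply: sum_halving_le => // i mi; rewrite wS mulrCA; apply: ler_piMr => //.
  by rewrite mulrA ler_pdivrMr ?dratio_gt0 // mul1r dratio_double.
by rewrite wm in hi; lra.
Qed.

Lemma Ltilde0_near_two_point :
  0 <= Ltilde0 rho k t - (Lbase rho k - ln (dcoef R m) - th * ln (dratio R m)) <= ln 4.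
Proof.
suff /andP[lo hi] : Lobj rho k t (two_point m th) <= Ltilde0 rho k t
                    <= Lbase rho k - ln (dcoef R m) - th * lam + ln 4.
  by have := Lobj_two_point; move: lo hi; rewrite /lam; lra.
apply: Ltilde0_sandwich two_point_feasible _ => p fp.
apply: le_trans (Lobj_le_partition k lam fp) _.
rewrite -/(\sum_(1 <= i < t.+1) w i).
have Z0 : 0 < \sum_(1 <= i < t.+1) w i.
  rewrite big_ltn ?ltnS ?(leq_trans m_gt0 (ltnW m_lt_t)) //.
  by apply: ltr_pwDl; [exact: expR_gt0 | apply: sumr_ge0 => i _; exact: ltW (expR_gt0 _)].
have : ln (\sum_(1 <= i < t.+1) w i) <= ln (4 * w m).
  by rewrite ler_ln ?posrE ?mulr_gt0 ?expR_gt0 //; exact: partition_le.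
by rewrite lnM ?posrE ?expR_gt0 // expRK /th; lra.
Qed.

End TwoPoint.

Section Asymptotics.
Variables (R : realType) (K n k : R) (a t : nat).

Local Notation L := (ln n).
Local Notation rho := (n / k).
Local Notation u := (2 / ln (2 : R)).
Local Notation m := (Num.truncn rho).

(* L_large makes a^2 + a <= n, because a <= (u + 2 K) ln n and
   n >= (ln n)^3 / 6. *)
Hypotheses (k_gt0 : 0 < k) (n_gt0 : 0 < n)
  (L_large : 1 + 2 * K + 12 * (u + 2 * K) ^+ 2 <= L)
  (rho_ge1 : 1 <= rho) (rho_lt_t : rho < t%:R) (t_le_a : (t <= a)%N)
  (rho_near_W : `|rho - u * (L - ln L)| <= K) (a_near_rho : a%:R - rho <= K).

Let K_ge0 : 0 <= K.
Proof. by have := normr_ge0 (rho - u * (L - ln L)); have := rho_near_W; lra. Qed.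

Let u_ge2 : 2 <= u.
Proof. by rewrite ler_pdivlMr ?ln2_gt0 //; have := @ln2_le1 R; lra. Qed.

Let L_ge : 1 + 2 * K <= L.
Proof. by have := sqr_ge0 (u + 2 * K); have := L_large; lra. Qed.

Let rho_bounds : L <= 2 * rho /\ rho <= (u + K) * L.
Proof.
have u2 := u_ge2; have K0 := K_ge0; have LK := L_ge.
have L0 : 0 < L by lra.
have /andP[lnL0 lnL1] : 0 <= ln L <= L / 2 by rewrite ln_ge0 ?ln_le_half //; lra.
have W_lo : 2 * (L / 2) <= u * (L - ln L) by apply: ler_pM => //; lra.
have W_hi : u * (L - ln L) <= u * L by apply: ler_wpM2l; lra.
have KL : K <= K * L by rewrite ler_peMr //; lra.
by move: rho_near_W; rewrite ler_norml; lra.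
Qed.

Let m_bounds : m%:R <= rho < m%:R + 1.
Proof. by rewrite natr1 truncn_itv //; have := rho_ge1; lra. Qed.

Let s_bounds : 0 <= a%:R - rho <= K.
Proof.
have : t%:R <= a%:R :> R by rewrite ler_nat.
by have := rho_lt_t; have := a_near_rho; lra.
Qed.

Let m_le_a : (m <= a)%N.
Proof. by rewrite -(ler_nat R); have := m_bounds; have := s_bounds; lra. Qed.

Let ln_rho_near : -1 <= ln rho - ln L <= u + K.
Proof.
have [Lrho rhoL] := rho_bounds; have K0 := K_ge0; have LK := L_ge.
have L0 : 0 < L by lra.
have rho0 : 0 < rho by have := rho_ge1; lra.
have := ln_sub_le rho0 L0; have := ln_sub_le L0 rho0.
have : rho / L <= u + K by rewrite ler_pdivrMr.
have : L / rho <= 2 by rewrite ler_pdivrMr // mulrC.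
set x := rho / L; set y := L / rho; lra.
Qed.

Let ln_dratio_near : `|ln (dratio R m) - 2 * L + ln L| <= u + 2 * K + 1.
Proof.
have [Lrho rhoL] := rho_bounds; have /andP[m1 m2] := m_bounds.
have K0 := K_ge0; have LK := L_ge; have u2 := u_ge2.
have L0 : 0 < L by lra.
have l2 := @ln2_gt0 R; have l21 := @ln2_le1 R.
have mW : `|(m%:R - u * (L - ln L)) * ln 2| <= 1 + K.
  rewrite normrM (gtr0_norm l2); apply: le_trans (ler_piMr (normr_ge0 _) l21) _.
  by move: rho_near_W; rewrite !ler_norml; lra.
have lnm_hi : ln m.+1%:R - ln L <= u + K.
  apply: le_trans (ln_sub_le (ltr0Sn R m) L0) _.
  have : m.+1%:R / L <= u + K + 1 by rewrite ler_pdivrMr // -natr1; lra.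
  lra.
have lnm_lo : ln L - ln m.+1%:R <= 1.
  apply: le_trans (ln_sub_le L0 (ltr0Sn R m)) _.
  have : L / m.+1%:R <= 2 by rewrite ler_pdivrMr ?ltr0Sn // -natr1; lra.
  set x := L / _; lra.
have -> : ln (dratio R m) - 2 * L + ln L
          = (m%:R - u * (L - ln L)) * ln 2 + (ln m.+1%:R - ln L).
  by rewrite ln_dratio; field; rewrite lt0r_neq0.
move: mW; rewrite !ler_norml; set v := (_ * ln 2); lra.
Qed.

Let ln_dcoef_near :
  0 <= ln (dcoef R a) - ln (dcoef R m) - (a%:R - m%:R) * ln (dratio R m)
    <= (K + 1) * (2 * K + 1).
Proof.
have /andP[m1 m2] := m_bounds; have /andP[s0 s1] := s_bounds; have K0 := K_ge0.
have am : a%:R - m%:R <= K + 1 by lra.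
have -> : (a%:R - m%:R) * ln (dratio R m) = \sum_(m <= l < a) ln (dratio R m).
  by rewrite sumr_const_nat -[ln (dratio R m) *+ (a - m)]mulr_natl natrB.
rewrite ln_dcoef_sub // -sumrB; apply/andP; split.
  by rewrite big_nat; apply: sumr_ge0 => l /andP[ml _]; case/andP: (ln_dratio_sub_bounds R ml).
apply: (@le_trans _ _ (\sum_(m <= l < a) (2 * K + 1))).
  apply: ler_sum_nat => l /andP[ml la]; have /andP[_ h] := ln_dratio_sub_bounds R ml.
  apply: le_trans h _.
  have la' : l%:R + 1 <= a%:R :> R by rewrite natr1 ler_nat.
  have : l.+1%:R / m.+1%:R <= 1 + K.
    rewrite ler_pdivrMr ?ltr0Sn // -!natr1 mulrDl mul1r.
    have : K <= K * (m%:R + 1) by rewrite ler_peMr //; have := ler0n R m; lra.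
    lra.
  have : l%:R - m%:R <= K + 1 by lra.
  set x := _ / _; lra.
rewrite sumr_const_nat -[(2 * K + 1) *+ (a - m)]mulr_natl natrB //.
by apply: ler_wpM2r => //; lra.
Qed.

Let a_sq_le : (1 : R) <= a%:R ^+ 2 <= n - a%:R.
Proof.
have [_ rhoL] := rho_bounds; have /andP[s0 s1] := s_bounds.
have K0 := K_ge0; have LK := L_ge; have u2 := u_ge2; have r1 := rho_ge1.
have L0 : 0 < L by lra.
set c := u + 2 * K.
have a1 : 1 <= a%:R :> R by lra.
have KL : K <= K * L by rewrite ler_peMr //; lra.
have acL : a%:R <= c * L by rewrite /c mulrDl; lra.
have a2 : a%:R ^+ 2 <= (c * L) ^+ 2 by rewrite !expr2; apply: ler_pM; lra.
have aa : a%:R <= a%:R ^+ 2 :> R by rewrite expr2 ler_peMr //; lra.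
have cL : 12 * (c * L) ^+ 2 <= L ^+ 3.
  rewrite exprMn mulrA [L ^+ 3]exprS; apply: ler_wpM2r; first exact: sqr_ge0.
  by have := L_large; rewrite -/c; lra.
have := expR_ge_cube (ltW L0); rewrite lnK ?posrE //.
move: a1 a2 aa cL; set y := a%:R ^+ 2; set z := (c * L) ^+ 2; set w := L ^+ 3; lra.
Qed.

Let ln_falling_near : 0 <= a%:R * L - ln (\prod_(0 <= i < a) (n - i%:R)) <= 1.
Proof.
have /andP[a1 a2] := a_sq_le.
have /andP[h0 h1] := @ln_falling_bounds R n a ltac:(lra).
rewrite h0; apply: le_trans h1 _; rewrite ler_pdivrMr; lra.
Qed.

Lemma Lhat0_expansion_error :
  `| Lhat0 n k t - ((a%:R - rho - 1 - u) * (L - ln L) + ln (mu a n)) |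
    <= (u + 2 * K + 3) ^+ 2.
Proof.
have /andP[a1 a2] := a_sq_le.
rewrite /Lhat0 ln_mu; last by lra.
have := Ltilde0_near_two_point k rho_ge1 rho_lt_t; rewrite Lbase_div //.
set V := Ltilde0 _ _ _; set lq := ln (dratio R m).
set P := ln (\prod_(0 <= i < a) _); set da := ln (dcoef R a); set dm := ln (dcoef R m).
move=> gap.
have -> : V - ((a%:R - rho - 1 - u) * (L - ln L) + (P - da)) =
    (V - ((rho - 1) * L + ln rho - rho + 1 - dm - (rho - m%:R) * lq))
    + (a%:R - rho) * (lq - 2 * L + ln L) + (u * (L - ln L) - rho) + (ln rho - ln L) + 1
    + (da - dm - (a%:R - m%:R) * lq) + (a%:R * L - P) by ring.
have sv : `|(a%:R - rho) * (lq - 2 * L + ln L)| <= K * (u + 2 * K + 1).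
  have /andP[s0 s1] := s_bounds.
  by rewrite normrM ger0_norm //; apply: ler_pM => //; exact: ln_dratio_near.
have C : 3 + K * (u + 2 * K + 1) + K + (u + K) + 2 + (K + 1) * (2 * K + 1) + 1
         <= (u + 2 * K + 3) ^+ 2.
  by have := K_ge0; have := u_ge2; nra.
move: gap sv rho_near_W ln_rho_near ln_dcoef_near ln_falling_near (@ln4_le3 R) C.
set E0 := V - _; set X := (a%:R - rho) * (lq - 2 * L + ln L).
set W := u * (L - ln L); set E1 := da - dm - _; set E2 := a%:R * L - P.
set Y := K * (u + 2 * K + 1); set Z := (K + 1) * (2 * K + 1); set B := (u + 2 * K + 3) ^+ 2.
rewrite !ler_norml => /andP[g0 g1] /andP[sv0 sv1] /andP[w0 w1] /andP[r0 r1].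
move=> /andP[e0 e1] /andP[f0 f1] l4 C.
apply/andP; split; lra.
Qed.

End Asymptotics.

Lemma alpha0E (R : realType) (n : R) : 1 < n ->
  alpha0 n = 2 / ln 2 * (ln n - ln (ln n)) + (2 / ln 2 * (ln (ln 2) + 1) - 1).
Proof.
move=> n1; have := ln_gt0 n1; have := @ln2_gt0 R => l2 lnn.
rewrite /alpha0 /log2 !ln_div ?posrE ?expR_gt0 // expRK.
by field; rewrite lt0r_neq0.
Qed.

Theorem lemma39 (R : realType) (C1 c2 C2 : R) (hc2 : 0 < c2) :
  exists N C : R, forall (n k : R) (a t : nat),
    N <= n -> 0 < k -> k < n -> (0 < t)%N -> (t <= a)%N ->
    `|a%:R - alpha0 n| <= C1 -> `|t%:R - alpha0 n| <= C1 ->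
    2 <= n / k -> c2 <= t%:R - n / k <= C2 ->
    `| Lhat0 n k t
       - ((a%:R - n / k - 1 - 2 / ln 2) * (ln n - ln (ln n)) + ln (mu a n)) |
      <= C.
Proof.
set u := 2 / ln (2 : R); set kap := u * (ln (ln 2) + 1) - 1.
set K := 2 * `|C1| + `|C2| + `|kap|.
exists (expR (1 + 2 * K + 12 * (u + 2 * K) ^+ 2)), ((u + 2 * K + 3) ^+ 2).
move=> n k a t hN k0 _ _ ta ha ht hrho /andP[hc1 hc2'].
have K_def : K = 2 * `|C1| + `|C2| + `|kap| by [].
have [C1_ge0 C1_le] := (normr_ge0 C1, ler_norm C1).
have [C2_ge0 C2_le] := (normr_ge0 C2, ler_norm C2).
have /andP[kap_lo kap_hi] : - `|kap| <= kap <= `|kap| by rewrite -ler_norml.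
have n1 : 1 < n.
  by apply: lt_le_trans hN; rewrite expR_gt1; have := sqr_ge0 (u + 2 * K); lra.
have hL : 1 + 2 * K + 12 * (u + 2 * K) ^+ 2 <= ln n.
  by rewrite -ler_expR lnK ?posrE //; lra.
rewrite alpha0E // -/u -/kap !ler_norml in ha ht.
case/andP: ha => ha1 ha2; case/andP: ht => ht1 ht2.
apply: Lhat0_expansion_error => //; try lra.
by rewrite -/u ler_norml; apply/andP; split; lra.
Qed.
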